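(* For the Diverse Population-Based EA on the weighted vertex cover problem with $n$ vertices, the search point $0^n$ is included in the population in expected time $O(n^2\log n)$.
   Context: Weighted vertex cover: $G=(V,E)$, $V=\{v_1,\dots,v_n\}$, $w:V\to\mathbb{N}^+$. Search points $x\in\{0,1\}^n$; $|x|_1$ is the number of ones. $Cost(x)=\sum_i w(v_i)x_i$; $G(x)=(V(x),E(x))$ with $V(x)=V\setminus\{v_i:x_i=1\}$, $E(x)$ = edges with no selected endpoint; $LP(x)$ = optimal value of: minimize $\sum_{v_i\in V(x)}w(v_i)y_i$ s.t. $y_i+y_j\ge1$ for $\{v_i,v_j\}\in E(x)$, $0\le y_i\le1$. Alternative mutation operator on $x$: choose $b\in\{0,1\}$ uniformly; if $b=1$, flip each $x_i$ with probability $1/2$ if $v_i$ is incident to an edge of $E(x)$ and with probability $1/n$ otherwise; if $b=0$, flip each bit independently with probability $1/n$. Diverse Population-Based EA: start with uniformly random $x$, $P=\{x\}$. Each iteration: choose $x\in P$ uniformly; create $x'$ by the alternative mutation operator; add $x'$ to $P$; let $P'=\{y\in P:|y|_1=|x'|_1\}$; let $y_{min_1}\in P'$ minimize $Cost(z)+LP(z)$ and $y_{min_2}\in P'$ minimize $Cost(z)+2LP(z)$ over $P'$; set $P\leftarrow(P\setminus P')\cup\{y_{min_1},y_{min_2}\}$. Time = number of iterations. *)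

From HB Require Import structures.
From mathcomp Require Import all_boot all_order all_algebra.
From mathcomp Require Import reals exp.
Set Implicit Arguments. Unset Strict Implicit. Unset Printing Implicit Defensive.
Import Order.TTheory GRing.Theory Num.Theory.
Local Open Scope ring_scope.

Section DiverseEA.
Context {R : realType} (n : nat).

Definition point := {ffun 'I_n -> bool}.
Definition pop := {set point}.

Definition zero_point : point := [ffun _ => false].

Definition ones (x : point) : nat := #|[set i | x i]|.

Context (e : rel 'I_n) (w : 'I_n -> nat).

Definition cost (x : point) : R := \sum_(i < n) ((w i)%:R * (x i)%:R).

Definition inVx (x : point) (i : 'I_n) : bool := ~~ x i.
Definition inEx (x : point) (i j : 'I_n) : bool := [&& e i j, ~~ x i & ~~ x j].

(* feasible solutions of the LP relaxation of G(x) (coordinates indexed by V(x);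
   values outside V(x) are irrelevant) *)
Definition lp_feasible (x : point) (y : 'I_n -> R) : Prop :=
  (forall i, inVx x i -> 0 <= y i <= 1) /\
  (forall i j, inEx x i j -> 1 <= y i + y j).

Definition lp_values (x : point) : classical_sets.set R :=
  fun c => exists y : 'I_n -> R, lp_feasible x y /\
           c = \sum_(i < n | inVx x i) (w i)%:R * y i.

Definition LP (x : point) : R := inf (lp_values x).

Definition f1 (x : point) : R := cost x + LP x.
Definition f2 (x : point) : R := cost x + 2 * LP x.

Definition incident (x : point) (i : 'I_n) : bool :=
  [exists j, inEx x i j || inEx x j i].

Definition flip_prob (p : 'I_n -> R) (x x' : point) : R :=
  \prod_(i < n) (if x i != x' i then p i else 1 - p i).

Definition mut_prob (x x' : point) : R :=
  2^-1 * flip_prob (fun i => if incident x i then 2^-1 else (n%:R)^-1) x x'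
  + 2^-1 * flip_prob (fun _ => (n%:R)^-1) x x'.

Definition argmin_selector (f : point -> R) (sel : pop -> point) : Prop :=
  forall S : pop, (0 < #|S|)%N -> sel S \in S /\ (forall z, z \in S -> f (sel S) <= f z).

Context (sel1 sel2 : pop -> point).

Definition update (P : pop) (x' : point) : pop :=
  let P1 := x' |: P in
  let P' := [set y in P1 | ones y == ones x'] in
  (P1 :\: P') :|: [set sel1 P'; sel2 P'].

Definition trans (P P2 : pop) : R :=
  \sum_(x in P) (#|P|%:R)^-1 *
    \sum_(x' : point) mut_prob x x' * (update P x' == P2)%:R.

Definition init_dist (P : pop) : R :=
  \sum_(x : point) ((2 ^ n)%:R)^-1 * (P == [set x])%:R.

(* surv t P = Pr[P_t = P and 0^n not in P_0, ..., P_t] *)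
Fixpoint surv (t : nat) (P : pop) : R :=
  match t with
  | 0 => if zero_point \in P then 0 else init_dist P
  | t'.+1 => if zero_point \in P then 0 else
             \sum_(Q : pop) surv t' Q * trans Q P
  end.

(* Pr[T > t], where T = first iteration at which 0^n is in the population *)
Definition tail_prob (t : nat) : R := \sum_(P : pop) surv t P.

(* E[T] = sum_{t >= 0} Pr[T > t]; partial sums *)
Definition expected_time_partial (N : nat) : R := \sum_(t < N) tail_prob t.

End DiverseEA.

Definition simple_graph (n : nat) (e : rel 'I_n) : Prop :=
  symmetric e /\ irreflexive e.

(** Additive drift.  Let [m(P)] be the least number of ones in a population [P]
and use the potential [c * h(m(P))] with [h 0 = 0], [h k = 1 + ln k] and
[c = 4 e n (n + 1)].  An iteration never increases [m]: the offspring's level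
keeps a representative after selection, and the other levels are untouched.
Selection also keeps at most two points per level, so [|P| <= 2 (n + 1)].
Choosing a point with [m] ones (probability at least [1 / (2 (n + 1))]) and
flipping exactly one of its [m] one-bits with the standard-bit-mutation half of
the operator (probability at least [m / (2 e n)]) reaches level [m - 1], and
[h m - h (m - 1) >= 1 / m].  Hence the expected potential drops by at least [1]
per iteration while [0^n] is missing, and the expected hitting time is at most
the initial potential [c (1 + ln n) = O(n^2 log n)]. *)

From HB Require Import structures.
From mathcomp Require Import all_boot all_order all_algebra.
From mathcomp Require Import reals exp sequences.
From mathcomp Require Import lra ring.
Import Order.TTheory GRing.Theory Num.Theory.
Local Open Scope ring_scope.
Set Implicit Arguments. Unset Strict Implicit. Unset Printing Implicit Defensive.

Lemma ler_sum_inj (R : numDomainType) (I J : finType) (A : {pred I}) (f : I -> J)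
    (F : J -> R) :
  injective f -> (forall j, 0 <= F j) -> \sum_(i in A) F (f i) <= \sum_j F j.
Proof.
move=> f_inj F_ge0; rewrite -(big_imset _ (in2W f_inj)) /=.
by rewrite [leRHS](bigID (mem (f @: A))) /= lerDl sumr_ge0.
Qed.

Lemma le_ln_sub (R : realType) (a b : R) : 0 < a -> 0 < b -> 1 - a / b <= ln b - ln a.
Proof.
move=> a0 b0; have ab_gtN1 : -1 < a / b - 1 by have := divr_gt0 a0 b0; lra.
have := le_ln1Dx ab_gtN1; rewrite [1 + _]addrC subrK ln_div ?posrE //; lra.
Qed.

Lemma expR1_inv_le (R : realType) k : (expR 1)^-1 <= (1 - (k.+1%:R : R)^-1) ^+ k.
Proof.
have e1 : (1 : R) <= expR 1 by have := @expR_ge1Dx R 1; lra.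
case: k => [|k]; first by rewrite expr0 invf_le1 ?(lt_le_trans ltr01).
set b : R := 1 + (k.+1%:R)^-1.
have b0 : 0 < b by rewrite ltr_pwDl ?invr_ge0.
have -> : 1 - (k.+2%:R : R)^-1 = b^-1.
  rewrite /b -[k.+2]addn1 natrD; have : (0 : R) < k.+1%:R by []; move: (k.+1%:R : R) => x x0.
  by field; apply/andP; split; apply: lt0r_neq0; lra.
rewrite exprVn lef_pV2 ?posrE ?exprn_gt0 ?expR_gt0 //.
rewrite -[X in expR X](@mulfV _ k.+1%:R) ?pnatr_eq0 // expRM_natl.
by rewrite lerXn2r ?nnegrE ?expR_ge0 ?(ltW b0) ?expR_ge1Dx.
Qed.

Section AdditiveDrift.
(* [s t P]: probability of being in state [P] at time [t] without having visited a
   [dead] state; states outside [good] are never entered. *)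
Variables (R : realDomainType) (S : finType).
Variables (tr : S -> S -> R) (good dead : pred S) (phi : S -> R) (s : nat -> S -> R).
Hypothesis tr_ge0 : forall Q P, 0 <= tr Q P.
Hypothesis tr_good : forall Q P, good Q -> ~~ good P -> tr Q P = 0.
Hypothesis phi_ge0 : forall P, 0 <= phi P.
Hypothesis s0_ge0 : forall P, 0 <= s 0 P.
Hypothesis s0_good : forall P, ~~ good P -> s 0 P = 0.
Hypothesis s0_dead : forall P, dead P -> s 0 P = 0.
Hypothesis sS : forall t P, s t.+1 P = if dead P then 0 else \sum_Q s t Q * tr Q P.
Hypothesis drift : forall Q, good Q -> ~~ dead Q -> \sum_P tr Q P * phi P <= phi Q - 1.

Lemma s_ge0 t P : 0 <= s t P.
Proof.
elim: t P => [|t IH] P //; rewrite sS; case: ifP => // _.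
by apply: sumr_ge0 => Q _; rewrite mulr_ge0.
Qed.

Lemma s_dead t P : dead P -> s t P = 0.
Proof. by case: t => [|t]; [exact: s0_dead | rewrite sS => ->]. Qed.

Lemma s_good t P : ~~ good P -> s t P = 0.
Proof.
elim: t P => [|t IH] P nP; first exact: s0_good.
rewrite sS; case: ifP => // _; apply: big1 => Q _.
by case: (boolP (good Q)) => gQ; [rewrite tr_good ?mulr0 | rewrite IH ?mul0r].
Qed.

Let pot (t : nat) : R := \sum_(P : S) s t P * phi P.

Lemma pot_step t : pot t.+1 + \sum_P s t P <= pot t.
Proof.
have pot_succ : pot t.+1 <= \sum_Q s t Q * \sum_P tr Q P * phi P.
  under [X in _ <= X]eq_bigr => Q _ do rewrite mulr_sumr.
  rewrite exchange_big /=; apply: ler_sum => P _.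
  under [X in _ <= X]eq_bigr => Q _ do rewrite mulrA.
  rewrite -mulr_suml sS; case: ifP => _; rewrite ?mul0r //.
  by rewrite mulr_ge0 ?sumr_ge0 // => Q _; rewrite mulr_ge0 ?s_ge0.
have pot_pred : \sum_Q s t Q * (phi Q - 1) = pot t - \sum_Q s t Q.
  by rewrite -sumrB; apply: eq_bigr => Q _; rewrite mulrBr mulr1.
suff : \sum_Q s t Q * \sum_P tr Q P * phi P <= \sum_Q s t Q * (phi Q - 1) by lra.
apply: ler_sum => Q _.
case: (boolP (good Q)) => [gQ|nQ]; last by rewrite s_good // !mul0r.
case: (boolP (dead Q)) => [dQ|aQ]; first by rewrite s_dead // !mul0r.
by rewrite ler_wpM2l ?s_ge0 ?drift.
Qed.

Theorem additive_drift N : \sum_(t < N) \sum_P s t P <= \sum_P s 0 P * phi P.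
Proof.
suff : \sum_(t < N) \sum_P s t P + pot N <= pot 0.
  have : 0 <= pot N by apply: sumr_ge0 => P _; rewrite mulr_ge0 ?s_ge0.
  rewrite /pot; lra.
elim: N => [|N IH]; first by rewrite big_ord0 add0r.
rewrite big_ord_recr /=; have := pot_step N; lra.
Qed.

End AdditiveDrift.

Section Population.
Variable n : nat.
Implicit Types (x y : point n) (Q : pop n).

Lemma ones_le x : (ones x <= n)%N.
Proof. by rewrite /ones -[leqRHS]card_ord max_card. Qed.

Lemma ones_eq0 x : ones x = 0%N -> x = zero_point n.
Proof.
move/eqP; rewrite cards_eq0 => /eqP x0; apply/ffunP => i; rewrite ffunE.
by apply/negP => xi; have := in_set0 i; rewrite -x0 inE xi.
Qed.

Definition flip x (i : 'I_n) : point n :=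
  [ffun j => if j == i then ~~ x j else x j].

Lemma ones_flip x i : x i -> ones (flip x i) = (ones x).-1.
Proof.
move=> xi; rewrite /ones; have -> : [set j | flip x i j] = [set j | x j] :\ i.
  by apply/setP => j; rewrite !inE ffunE; case: eqVneq => [->|]; rewrite ?xi.
by rewrite (cardsD1 i [set j | x j]) inE xi.
Qed.

Lemma flip_inj x : injective (flip x).
Proof.
move=> i j /ffunP /(_ i); rewrite !ffunE eqxx.
by case: eqVneq => // _; case: (x i).
Qed.

Definition min_ones Q : nat := \big[minn/n]_(y in Q) ones y.

Lemma min_ones_le Q y : y \in Q -> (min_ones Q <= ones y)%N.
Proof. exact: (@bigmin_le_cond _ nat _ n y (mem Q) (@ones n)). Qed.

Lemma min_ones_le_n Q : (min_ones Q <= n)%N.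
Proof. by apply: (big_rec (leq^~ n)) => // y m _; rewrite geq_min => ->; rewrite orbT. Qed.

Lemma min_ones_ge Q k :
  (k <= n)%N -> (forall y, y \in Q -> k <= ones y)%N -> (k <= min_ones Q)%N.
Proof. by move=> kn Qk; apply: (big_ind (leq k)) => // a b; rewrite leq_min => -> ->. Qed.

Lemma min_ones_attained Q : Q != set0 -> exists2 y, y \in Q & ones y = min_ones Q.
Proof.
case/set0Pn => y0 y0Q.
have [y yQ Qy] := @eq_bigmin _ nat _ n _ (mem Q) (@ones n) y0Q (fun y _ => ones_le y).
by exists y; last exact/esym.
Qed.

Definition level Q (k : nat) : pop n := [set y in Q | ones y == k].

Lemma in_level Q k y : (y \in level Q k) = (y \in Q) && (ones y == k).
Proof. by rewrite inE. Qed.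

Lemma level_sub Q k : level Q k \subset Q.
Proof. by apply/subsetP => y; rewrite in_level => /andP[]. Qed.

Definition wf_pop Q : bool := (Q != set0) && [forall k : 'I_n.+1, #|level Q k| <= 2]%N.

Lemma card_wf_pop Q : wf_pop Q -> (#|Q| <= 2 * n.+1)%N.
Proof.
case/andP => _ /forallP Q2.
rewrite -sum1_card (partition_big (fun y => Ordinal (ones_le y : ones y < n.+1)%N) xpredT) //=.
have -> : (2 * n.+1 = \sum_(k < n.+1) 2)%N by rewrite sum_nat_const card_ord mulnC.
apply: leq_sum => k _.
rewrite sum1_card (leq_trans _ (Q2 k)) // subset_leq_card //.
by apply/subsetP => y; rewrite !inE => /andP[-> /eqP <-] /=.
Qed.

Lemma wf_pop1 x : wf_pop [set x].
Proof.
rewrite /wf_pop -card_gt0 cards1; apply/forallP => k.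
by rewrite (leq_trans (subset_leq_card (level_sub _ _))) ?cards1.
Qed.

Variables sel1 sel2 : pop n -> point n.
Hypothesis sel1_in : forall S : pop n, (0 < #|S|)%N -> sel1 S \in S.
Hypothesis sel2_in : forall S : pop n, (0 < #|S|)%N -> sel2 S \in S.

Section Update.
Variables (Q : pop n) (x' : point n).

Let L := level (x' |: Q) (ones x').

Lemma card_offspring_level_gt0 : (0 < #|L|)%N.
Proof. by rewrite card_gt0; apply/set0Pn; exists x'; rewrite !inE !eqxx. Qed.

Lemma ones_sel1 : ones (sel1 L) = ones x'.
Proof. by have := sel1_in card_offspring_level_gt0; rewrite inE => /andP[_ /eqP]. Qed.

Lemma ones_sel2 : ones (sel2 L) = ones x'.
Proof. by have := sel2_in card_offspring_level_gt0; rewrite inE => /andP[_ /eqP]. Qed.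

Lemma in_update y : (y \in update sel1 sel2 Q x') =
  if ones y == ones x' then y \in [set sel1 L; sel2 L] else y \in Q.
Proof.
rewrite /update !inE -/L.
have [yx|yx] := eqVneq (ones y) (ones x'); first by rewrite andbT andNb.
have y_x' : y != x' by apply: contraNneq yx => ->.
have y_sel1 : y != sel1 L by apply: contraNneq yx => ->; rewrite ones_sel1.
have y_sel2 : y != sel2 L by apply: contraNneq yx => ->; rewrite ones_sel2.
by rewrite (negbTE y_x') (negbTE y_sel1) (negbTE y_sel2) andbF /= !orbF.
Qed.

Lemma sel1_in_update : sel1 L \in update sel1 sel2 Q x'.
Proof. by rewrite in_update ones_sel1 eqxx !inE eqxx. Qed.

Lemma update_neq0 : update sel1 sel2 Q x' != set0.
Proof. by apply/set0Pn; exists (sel1 L); exact: sel1_in_update. Qed.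

Lemma wf_pop_update : wf_pop Q -> wf_pop (update sel1 sel2 Q x').
Proof.
case/andP => _ /forallP Q2; rewrite /wf_pop update_neq0; apply/forallP => k.
have [kx|kx] := eqVneq (k : nat) (ones x').
  apply: (@leq_trans #|[set sel1 L; sel2 L]|); last by rewrite cards2; case: (_ != _).
  apply: subset_leq_card; apply/subsetP => y.
  by rewrite in_level in_update -kx; case: (ones y == k); rewrite ?andbT ?andbF.
apply: leq_trans (Q2 k); apply: subset_leq_card; apply/subsetP => y.
by rewrite !in_level in_update => /andP[+ /eqP yk]; rewrite yk (negbTE kx) eqxx andbT.
Qed.

Lemma min_ones_update_le_offspring : (min_ones (update sel1 sel2 Q x') <= ones x')%N.
Proof. by rewrite -ones_sel1 min_ones_le // sel1_in_update. Qed.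

Lemma min_ones_update : (min_ones (update sel1 sel2 Q x') <= min_ones Q)%N.
Proof.
apply: min_ones_ge => [|y yQ]; first exact: min_ones_le_n.
have [yx|/negbTE yx] := eqVneq (ones y) (ones x').
  by rewrite yx min_ones_update_le_offspring.
by apply: min_ones_le; rewrite in_update yx.
Qed.

End Update.
End Population.

Section LogPotential.
Variable R : realType.

Definition hlog (k : nat) : R := if k == 0%N then 0 else 1 + ln (k%:R : R).

Lemma hlog_ge0 k : 0 <= hlog k.
Proof. by rewrite /hlog; case: eqP => // /eqP k0; rewrite addr_ge0 ?ln_ge0 ?ler1n ?lt0n. Qed.

Lemma hlog_mono : {homo hlog : k l / (k <= l)%N >-> k <= l}.
Proof.
move=> k l kl; rewrite {1}/hlog; case: eqP => [_|/eqP k0]; first exact: hlog_ge0.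
have l0 : l != 0%N by rewrite -lt0n (leq_trans _ kl) // lt0n.
by rewrite /hlog ifN // lerD2l ler_ln ?posrE ?ltr0n ?ler_nat ?lt0n.
Qed.

Lemma hlog_increment m : (0 < m)%N -> (m%:R : R)^-1 <= hlog m - hlog m.-1.
Proof.
case: m => [|[|k]] // _; first by rewrite /hlog /= ln1 invr1; lra.
rewrite /hlog /= opprD addrACA subrr add0r.
have -> : (k.+2%:R : R)^-1 = 1 - k.+1%:R / k.+2%:R.
  by rewrite -!natr1; field; rewrite !natr1 pnatr_eq0.
exact: le_ln_sub.
Qed.

End LogPotential.

Section Mutation.
Variables (R : realType) (n : nat) (e : rel 'I_n).
Implicit Types (x : point n) (p : 'I_n -> R).
Local Notation mut_prob := (@mut_prob R n e).

Lemma flip_prob_ge0 p x x' : (forall i, 0 <= p i <= 1) -> 0 <= flip_prob p x x'.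
Proof.
move=> p01; apply: prodr_ge0 => i _; have /andP[p0 p1] := p01 i.
by case: ifP; rewrite ?subr_ge0.
Qed.

Lemma flip_prob_sum p x : \sum_x' flip_prob p x x' = 1.
Proof.
rewrite /flip_prob -(bigA_distr_bigA (fun i b => if x i != b then p i else 1 - p i)).
by rewrite big1 // => i _; rewrite big_bool; case: (x i) => /=; ring.
Qed.

Lemma flip_prob_flip (q : R) x i :
  flip_prob (fun=> q) x (flip x i) = q * (1 - q) ^+ n.-1.
Proof.
rewrite /flip_prob (bigD1 i) //= ffunE eqxx; case: (x i) => /=; congr (_ * _);
  rewrite (eq_bigr (fun=> 1 - q)) ?prodr_const ?cardC1 ?card_ord // => j ji;
  by rewrite ffunE (negbTE ji) eqxx.
Qed.

(* Also for [n = 0], where [0^-1 = 0]. *)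
Lemma invn_itv01 : 0 <= (n%:R : R)^-1 <= 1.
Proof. by case: n => [|k]; rewrite ?invr0 ?lexx ?ler01 // invr_ge0 ler0n invf_le1 ?ler1n. Qed.

Lemma mut_rate_itv01 x i : 0 <= (if incident e x i then (2 : R)^-1 else n%:R^-1) <= 1.
Proof. by case: ifP => _; rewrite ?invn_itv01 //; apply/andP; split; lra. Qed.

Lemma mut_prob_ge0 x x' : 0 <= mut_prob x x'.
Proof.
by rewrite addr_ge0 // mulr_ge0 ?invr_ge0 // flip_prob_ge0 // => i;
  rewrite ?mut_rate_itv01 ?invn_itv01.
Qed.

Lemma mut_prob_sum x : \sum_x' mut_prob x x' = 1.
Proof. by rewrite big_split /= -!mulr_sumr !flip_prob_sum; lra. Qed.

Lemma mut_prob_flip x i : (2 * n%:R * expR 1)^-1 <= mut_prob x (flip x i).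
Proof.
have n_gt0 : (0 < n)%N := leq_ltn_trans (leq0n i) (ltn_ord i).
rewrite /mut_prob; apply: ler_wpDl.
  by rewrite mulr_ge0 ?invr_ge0 // flip_prob_ge0 // => j; rewrite mut_rate_itv01.
rewrite flip_prob_flip !invfM -mulrA ler_wpM2l ?invr_ge0 // ler_wpM2l ?invr_ge0 ?ler0n //.
by have := expR1_inv_le R n.-1; rewrite prednK.
Qed.

End Mutation.

Section Drift.
Variables (R : realType) (n : nat) (e : rel 'I_n) (sel1 sel2 : pop n -> point n).
Hypothesis sel1_in : forall S : pop n, (0 < #|S|)%N -> sel1 S \in S.
Hypothesis sel2_in : forall S : pop n, (0 < #|S|)%N -> sel2 S \in S.
Implicit Types (x : point n) (Q : pop n).
Local Notation mut_prob := (@mut_prob R n e).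
Local Notation update := (update sel1 sel2).

(* Chosen so that [drift_scale / (2 e n) = 2 (n + 1)]: mutating a point of minimal level
   lowers the expected potential by this much, and [2 (n + 1)] bounds [#|P|]. *)
Definition drift_scale : R := 4 * n%:R * n.+1%:R * expR 1.

Definition potential Q : R := drift_scale * hlog R (min_ones Q).

Lemma drift_scale_ge0 : 0 <= drift_scale.
Proof. by rewrite !mulr_ge0 ?expR_ge0. Qed.

Lemma potential_ge0 Q : 0 <= potential Q.
Proof. by rewrite mulr_ge0 ?drift_scale_ge0 ?hlog_ge0. Qed.

Lemma potential_le Q : potential Q <= drift_scale * hlog R n.
Proof. by rewrite ler_wpM2l ?drift_scale_ge0 ?hlog_mono ?min_ones_le_n. Qed.

Lemma potential_update Q x' : potential (update Q x') <= potential Q.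
Proof. by rewrite ler_wpM2l ?drift_scale_ge0 ?hlog_mono ?min_ones_update. Qed.

Definition mut_potential Q x : R := \sum_x' mut_prob x x' * potential (update Q x').

Lemma trans_potential Q :
  \sum_P trans e sel1 sel2 Q P * potential P = #|Q|%:R^-1 * \sum_(x in Q) mut_potential Q x.
Proof.
transitivity (\sum_P \sum_(x in Q) \sum_x'
    #|Q|%:R^-1 * (mut_prob x x' * ((update Q x' == P)%:R * potential P))).
  apply: eq_bigr => P _; rewrite mulr_suml; apply: eq_bigr => x _.
  by rewrite -mulrA mulr_suml mulr_sumr; apply: eq_bigr => x' _; ring.
rewrite exchange_big mulr_sumr; apply: eq_bigr => x _.
rewrite exchange_big mulr_sumr; apply: eq_bigr => x' _.
rewrite -!mulr_sumr (bigD1 (update Q x')) //= eqxx mul1r big1 ?addr0 // => P.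
by rewrite eq_sym => /negbTE ->; rewrite mul0r.
Qed.

Lemma mut_potential_le Q x : mut_potential Q x <= potential Q.
Proof.
rewrite -[leRHS]mul1r -(mut_prob_sum R e x) mulr_suml ler_sum // => x' _.
by rewrite ler_wpM2l ?mut_prob_ge0 ?potential_update.
Qed.

Lemma potential_flip_gain Q x i : ones x = min_ones Q -> x i ->
  drift_scale / (min_ones Q)%:R <= potential Q - potential (update Q (flip x i)).
Proof.
move=> x_min xi; have m_gt0 : (0 < min_ones Q)%N by rewrite -x_min /ones (cardsD1 i) inE xi.
rewrite /potential -mulrBr ler_wpM2l ?drift_scale_ge0 //.
apply: le_trans (hlog_increment R m_gt0) _; rewrite lerD2l lerN2 hlog_mono //.
by rewrite -x_min -(ones_flip xi) min_ones_update_le_offspring.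
Qed.

Lemma mut_potential_min Q x : ones x = min_ones Q -> (0 < min_ones Q)%N ->
  mut_potential Q x <= potential Q - 2 * n.+1%:R.
Proof.
move=> x_min m_gt0; set m := min_ones Q.
have gain_ge0 x' : 0 <= mut_prob x x' * (potential Q - potential (update Q x')).
  by rewrite mulr_ge0 ?mut_prob_ge0 ?subr_ge0 ?potential_update.
suff : 2 * n.+1%:R <= \sum_x' mut_prob x x' * (potential Q - potential (update Q x')).
  rewrite /mut_potential; under [in X in _ <= X -> _]eq_bigr => x' _ do rewrite mulrBr.
  by rewrite sumrB -mulr_suml mut_prob_sum mul1r; lra.
have n_gt0 : (0 < n)%N := leq_trans m_gt0 (min_ones_le_n Q).
have flip_gains : \sum_(i in [set i | x i]) (2 * n%:R * expR 1)^-1 * (drift_scale / m%:R)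
    = 2 * n.+1%:R.
  rewrite sumr_const -[#|_|]/(ones x) x_min -/m -mulr_natr /drift_scale.
  by field; rewrite !pnatr_eq0 -!lt0n m_gt0 n_gt0 gt_eqF ?expR_gt0.
rewrite -flip_gains; apply: le_trans (ler_sum_inj [set i | x i] (@flip_inj n x) gain_ge0).
apply: ler_sum => i; rewrite inE => xi.
apply: ler_pM; [ | | exact: mut_prob_flip | exact: potential_flip_gain].
  by rewrite invr_ge0 !mulr_ge0 ?expR_ge0.
by rewrite mulr_ge0 ?drift_scale_ge0 ?invr_ge0.
Qed.

Lemma potential_drift Q : wf_pop Q -> zero_point n \notin Q ->
  \sum_P trans e sel1 sel2 Q P * potential P <= potential Q - 1.
Proof.
move=> wfQ Q0; have /andP[Q_neq0 _] := wfQ.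
have [x xQ x_min] := min_ones_attained Q_neq0.
have m_gt0 : (0 < min_ones Q)%N.
  by rewrite lt0n; apply: contraNneq Q0 => m0; rewrite -(ones_eq0 (etrans x_min m0)).
have cardQ_gt0 : (0 : R) < #|Q|%:R by rewrite ltr0n card_gt0.
have cardQ_le : (#|Q|%:R : R) <= 2 * n.+1%:R by rewrite -natrM ler_nat card_wf_pop.
have mut_sum_le : \sum_(y in Q) mut_potential Q y <= potential Q * #|Q|%:R - 2 * n.+1%:R.
  rewrite mulr_natr -sumr_const (bigD1 x) //= [in leRHS](bigD1 x) //=.
  have := mut_potential_min x_min m_gt0.
  have : \sum_(y in Q | y != x) mut_potential Q y <= \sum_(y in Q | y != x) potential Q.
    by apply: ler_sum => y _; apply: mut_potential_le.
  lra.
rewrite trans_potential mulrC ler_pdivrMr //; nra.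
Qed.

End Drift.

Section ExpectedTime.
Variables (R : realType) (n : nat) (e : rel 'I_n) (sel1 sel2 : pop n -> point n).
Hypothesis sel1_in : forall S : pop n, (0 < #|S|)%N -> sel1 S \in S.
Hypothesis sel2_in : forall S : pop n, (0 < #|S|)%N -> sel2 S \in S.

Lemma init_dist_ge0 (P : pop n) : 0 <= @init_dist R n P.
Proof. by rewrite sumr_ge0 // => x _; rewrite mulr_ge0 ?invr_ge0. Qed.

Lemma init_dist_sum : \sum_P @init_dist R n P = 1.
Proof.
rewrite exchange_big /= (eq_bigr (fun=> (2 ^ n)%:R^-1)) => [|x _]; last first.
  by rewrite -mulr_sumr (bigD1 [set x]) //= eqxx big1 ?addr0 ?mulr1 // => P /negbTE ->.
rewrite sumr_const card_ffun card_bool card_ord -[in RHS](@mulVf R (2 ^ n)%:R) ?mulr_natr //.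
by rewrite pnatr_eq0 expn_eq0.
Qed.

Lemma init_dist_wf (P : pop n) : ~~ wf_pop P -> @init_dist R n P = 0.
Proof.
move=> nwfP; apply: big1 => x _.
by case: eqP => [P1|_]; [rewrite P1 wf_pop1 in nwfP | rewrite mulr0].
Qed.

Lemma trans_ge0 Q P : 0 <= trans e sel1 sel2 Q P :> R.
Proof.
rewrite sumr_ge0 // => x _; rewrite mulr_ge0 ?invr_ge0 // sumr_ge0 // => x' _.
by rewrite mulr_ge0 ?mut_prob_ge0.
Qed.

Lemma trans_wf Q P : wf_pop Q -> ~~ wf_pop P -> trans e sel1 sel2 Q P = 0 :> R.
Proof.
move=> wfQ nwfP; apply: big1 => x _; rewrite big1 ?mulr0 // => x' _.
by case: eqP => [U_P|_]; [rewrite -U_P wf_pop_update in nwfP | rewrite mulr0].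
Qed.

Local Notation surv := (@surv R n e sel1 sel2).
Local Notation potential := (@potential R n).

Lemma surv0_potential_le : \sum_P surv 0 P * potential P <= drift_scale R n * hlog R n.
Proof.
apply: (@le_trans _ _ (\sum_P @init_dist R n P * (drift_scale R n * hlog R n))).
  apply: ler_sum => P _; rewrite /= ler_pM ?potential_ge0 ?potential_le //;
    by case: ifP; rewrite ?init_dist_ge0.
by rewrite -mulr_suml init_dist_sum mul1r.
Qed.

Lemma expected_time_partial_le N :
  expected_time_partial e sel1 sel2 N <= drift_scale R n * hlog R n.
Proof.
apply: le_trans surv0_potential_le; rewrite /expected_time_partial /tail_prob.
apply: (@additive_drift _ _ (trans e sel1 sel2) (@wf_pop n) (fun P => zero_point n \in P)
  potential surv).
- exact: trans_ge0.
- exact: trans_wf.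
- exact: potential_ge0.
- by move=> P /=; case: ifP; rewrite ?init_dist_ge0.
- by move=> P /= nwfP; case: ifP; rewrite ?init_dist_wf.
- by move=> P /= ->.
- by [].
- exact: potential_drift.
Qed.

End ExpectedTime.

Lemma drift_scale_hlog_le (R : realType) n : (2 <= n)%N ->
  drift_scale R n * hlog R n <= 8 * expR 1 * (1 + (ln 2)^-1) * (n%:R ^+ 2 * ln (n%:R : R)).
Proof.
move=> n_ge2; have n_ge2R : (2 : R) <= n%:R by rewrite ler_nat.
have ln2_gt0 : (0 : R) < ln 2 by rewrite ln_gt0 //; lra.
have ln_ge : ln 2 <= ln (n%:R : R) by rewrite ler_ln ?posrE //; lra.
have scale_le : drift_scale R n <= 8 * expR 1 * n%:R ^+ 2.
  have : (0 : R) <= expR 1 * n%:R * (n%:R - 1) by rewrite !mulr_ge0 ?expR_ge0 // subr_ge0; lra.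
  rewrite /drift_scale -natr1 expr2; lra.
have hlog_le : hlog R n <= (1 + (ln 2)^-1) * ln (n%:R : R).
  rewrite /hlog ifN -?lt0n 1?(leq_trans _ n_ge2) // mulrDl mul1r [leLHS]addrC lerD2l.
  have : (ln 2)^-1 * ln 2 <= (ln 2)^-1 * ln (n%:R : R).
    by rewrite ler_wpM2l ?invr_ge0 ?(ltW ln2_gt0).
  by rewrite mulVf ?gt_eqF.
by rewrite mulrACA ler_pM ?drift_scale_ge0 ?hlog_ge0.
Qed.

Theorem lemma9 (R : realType) :
  exists (C : R) (n0 : nat), 0 < C /\
  forall (n : nat) (e : rel 'I_n) (w : 'I_n -> nat)
         (sel1 sel2 : pop n -> point n),
    (n0 <= n)%N ->
    simple_graph e ->
    (forall i, (0 < w i)%N) ->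
    argmin_selector (@f1 R n e w) sel1 ->
    argmin_selector (@f2 R n e w) sel2 ->
    forall N : nat,
      expected_time_partial e sel1 sel2 N <= C * (n%:R ^+ 2 * ln (n%:R : R)).
Proof.
exists (8 * expR 1 * (1 + (ln 2)^-1)), 2%N; split.
  by rewrite !mulr_gt0 ?expR_gt0 // ltr_pwDl ?invr_ge0 ?ln_ge0 //; lra.
(* Reaching [0^n] only needs the selectors to return members of their argument; the
   graph, the weights and the LP values play no role. *)
move=> n e w sel1 sel2 n_ge2 _ _ sel1_min sel2_min N.
apply: le_trans (drift_scale_hlog_le R n_ge2).
apply: expected_time_partial_le => S S_gt0.
  exact: (sel1_min S S_gt0).1.
exact: (sel2_min S S_gt0).1.
Qed.
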